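(* For every integer $n\ge 3$, \[ R_n(x)=R(\Gamma_{n-1},x)+x^3R(\Gamma_{n-3},x). \]
   Context: For $n\ge1$ let $\Xi_n$ (the $L$-fence) be the poset on $\{x_1,\dots,x_n\}$ whose cover relations are exactly: $x_2\prec x_1$, $x_3\prec x_2$, and for $3\le i\le n-1$, $x_i\prec x_{i+1}$ if $i$ is odd and $x_{i+1}\prec x_i$ if $i$ is even (so $x_1>x_2>x_3<x_4>x_5<x_6>\cdots$, keeping only the relations among elements that exist). A filter of a poset $P$ is a subset $F$ such that $x\in F$, $x\le y$ imply $y\in F$. $\Omega_n$ (the $n$-th matchable Lucas distributive lattice) is the set of filters of $\Xi_n$ ordered by reverse inclusion; $\Omega_0$ is the one-element lattice. The rank of a filter $F\in\Omega_n$ is $n-|F|$, and the rank generating function is $R_n(x)=\sum_{F\in\Omega_n}x^{\,n-|F|}$ (so $R_0(x)=1$). For $m\ge1$ let $Z_m$ be the fence on $\{z_1,\dots,z_m\}$ with cover relations $z_{i+1}\prec z_i$ for odd $i$ and $z_i\prec z_{i+1}$ for even $i$ ($1\le i\le m-1$), i.e. $z_1>z_2<z_3>z_4<\cdots$; $\Gamma_m$ (the Fibonacci cube/lattice) is the lattice of filters of $Z_m$ under reverse inclusion, with $R(\Gamma_m,x)=\sum_{F}x^{\,m-|F|}$ summing over filters $F$ of $Z_m$, and $R(\Gamma_0,x)=1$. *)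

From mathcomp Require Import all_boot all_order all_algebra.
Set Implicit Arguments. Unset Strict Implicit. Unset Printing Implicit Defensive.
Import GRing.Theory.
Local Open Scope ring_scope.

(* Elements x_1..x_n are encoded by i : 'I_n with x_{i+1} <-> i.
   [cov a b] (1-based labels) means x_a is covered by x_b, i.e. x_a ≺ x_b. *)

Definition Xi_cov (a b : nat) : bool :=
  [|| (a == 2%N) && (b == 1%N),
      (a == 3%N) && (b == 2%N),
      [&& (3 <= a)%N, odd a & b == a.+1]
    | [&& (3 <= b)%N, ~~ odd b & a == b.+1]].

Definition Z_cov (a b : nat) : bool :=
  ((odd b) && (a == b.+1)) || [&& (0 < a)%N, ~~ odd a & b == a.+1].

Definition poset_le (cov : nat -> nat -> bool) (n : nat) : rel 'I_n :=
  connect (fun u v : 'I_n => cov (u.+1) (v.+1)).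

Definition is_filter (cov : nat -> nat -> bool) (n : nat) (F : {set 'I_n}) : bool :=
  [forall x : 'I_n, forall y : 'I_n, ((x \in F) && poset_le cov x y) ==> (y \in F)].

Definition rank_gen (cov : nat -> nat -> bool) (n : nat) : {poly int} :=
  \sum_(F : {set 'I_n} | is_filter cov F) 'X^(n - #|F|).

Definition R_Omega (n : nat) : {poly int} := rank_gen Xi_cov n.
Definition R_Gamma (m : nat) : {poly int} := rank_gen Z_cov m.

(* Split the filters F of the L-fence according to whether they contain its
   top x_1.  As x_3 < x_2 < x_1, a filter missing x_1 also misses x_2 and x_3.
   So F is the full head {x_1}, resp. the empty head {x_1, x_2, x_3}, glued to
   a filter of the tail x_2 .. x_n, resp. x_4 .. x_n, and these tails are the
   fences Z_(n-1) and Z_(n-3); the empty head adds 3 to the rank.  Gluing a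
   fixed head trace A to any filter of the tail yields a filter as soon as both
   A and A together with the whole tail are filters. *)

From mathcomp Require Import all_boot all_order all_algebra.
Import GRing.Theory.
Local Open Scope ring_scope.

Lemma is_filterP (cov : nat -> nat -> bool) n (F : {set 'I_n}) :
  reflect (forall u v : 'I_n, cov u.+1 v.+1 -> u \in F -> v \in F)
          (is_filter cov F).
Proof.
apply: (iffP forallP) => [filterF u v uv uF | coverF x].
  by have /forallP/(_ v) := filterF u; rewrite uF /poset_le connect1.
apply/forallP => y; apply/implyP => /andP[xF /connectP[p]].
by elim: p x xF => [|z p IHp] x xF /= => [_ -> // | /andP[/coverF/(_ xF)/IHp]].
Qed.

Section Glue.

Variables (cov cov' : nat -> nat -> bool) (k m : nat).
Hypothesis cov_rshift : forall a b, cov (k + a).+1 (k + b).+1 = cov' a.+1 b.+1.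
Variable A : {set 'I_k}.

Definition glue (G : {set 'I_m}) : {set 'I_(k + m)} :=
  lshift m @: A :|: [set rshift k i | i in G].

Hypothesis filter_glue0 : is_filter cov (glue set0).
Hypothesis filter_glueT : is_filter cov (glue setT).

Lemma mem_glue_lshift G i : (lshift m i \in glue G) = (i \in A).
Proof.
rewrite inE (mem_imset _ _ (@lshift_inj _ _)) orbC.
by case: imsetP => // -[j _ /eqP]; rewrite eq_lrshift.
Qed.

Lemma mem_glue_rshift G i : (rshift k i \in glue G) = (i \in G).
Proof.
rewrite inE (mem_imset _ _ (@rshift_inj _ _)).
by case: imsetP => // -[j _ /eqP]; rewrite eq_rlshift.
Qed.

Lemma card_glue G : #|glue G| = (#|A| + #|G|)%N.
Proof.
rewrite cardsU !card_imset; [|exact: rshift_inj|exact: lshift_inj].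
suff /eqP -> : lshift m @: A :&: [set rshift k i | i in G] == set0.
  by rewrite cards0 subn0.
apply/set0Pn => -[_ /setIP[/imsetP[i _ ->] /imsetP[j _ /eqP]]].
by rewrite eq_lrshift.
Qed.

Lemma glue_subT G : glue G \subset glue setT.
Proof. exact/setUS/imsetS/subsetT. Qed.

Lemma is_filter_glue G : is_filter cov (glue G) = is_filter cov' G.
Proof.
apply/is_filterP/is_filterP => filterG u v uv uG.
  rewrite -(mem_glue_rshift G) in uG; rewrite -(mem_glue_rshift G).
  by apply: filterG uG; rewrite /= cov_rshift.
case: (split_ordP v) => [v' ->|v' ->] in uv *.
  have := is_filterP _ _ _ filter_glueT _ _ uv (subsetP (glue_subT G) u uG).
  by rewrite !mem_glue_lshift.
case: (split_ordP u) => [u' ->|u' ->] in uv uG *.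
  rewrite mem_glue_lshift -(mem_glue_lshift set0) in uG.
  by have := is_filterP _ _ _ filter_glue0 _ _ uv uG; rewrite mem_glue_rshift inE.
rewrite mem_glue_rshift in uG; rewrite mem_glue_rshift.
by apply: (filterG u'); rewrite // -cov_rshift.
Qed.

Lemma rank_gen_glue :
  \sum_(F : {set 'I_(k + m)} |
          is_filter cov F && ([set i | lshift m i \in F] == A))
     'X^(k + m - #|F|) = 'X^(k - #|A|) * rank_gen cov' m :> {poly int}.
Proof.
rewrite /rank_gen mulr_sumr (reindex glue) /=.
  apply: eq_big => G.
    have -> : [set i | lshift m i \in glue G] == A.
      by apply/eqP/setP => i; rewrite inE mem_glue_lshift.
    by rewrite andbT is_filter_glue.
  move=> _; rewrite -exprD card_glue; congr 'X^_.
  have := max_card A; have := max_card G; rewrite !card_ord.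
  by move=> leGm leAk; rewrite subnDA -addnBAC // -addnBA.
exists (fun F : {set 'I_(k + m)} => [set i : 'I_m | rshift k i \in F]).
  by move=> G _; apply/setP => i; rewrite inE mem_glue_rshift.
move=> F /andP[_ /eqP traceF].
apply/setP => i; case: (split_ordP i) => j ->.
  by rewrite mem_glue_lshift -traceF inE.
by rewrite mem_glue_rshift inE.
Qed.

End Glue.

Arguments glue {k m}.

Lemma glueTT k m : glue [set: 'I_k] [set: 'I_m] = setT.
Proof.
apply/setP => i; case: (split_ordP i) => j ->.
  by rewrite mem_glue_lshift !inE.
by rewrite mem_glue_rshift !inE.
Qed.

Lemma is_filterT (cov : nat -> nat -> bool) n : is_filter cov [set: 'I_n].
Proof. by apply/is_filterP => u v; rewrite !inE. Qed.

Lemma Xi_cov1 b : Xi_cov 1 b = false.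
Proof. by rewrite /Xi_cov; case: b => [|b] //=; rewrite !andbF. Qed.

Lemma Xi_cov_tail a b : (b <= 3)%N -> Xi_cov a.+4 b = false.
Proof. by rewrite /Xi_cov; case: b => [|[|[|[|b]]]] //= _; rewrite ?andbF. Qed.

Lemma Xi_cov_shift1 a b : Xi_cov a.+2 b.+2 = Z_cov a.+1 b.+1.
Proof.
rewrite /Xi_cov /Z_cov.
by case: a => [|[|a]]; case: b => [|[|b]]; rewrite /= ?negbK ?eqSS ?andbF // orbC.
Qed.

Lemma Xi_cov_shift3 a b : Xi_cov a.+4 b.+4 = Z_cov a.+1 b.+1.
Proof. by rewrite /Xi_cov /Z_cov /= !negbK orbC. Qed.

Lemma rank_gen_Xi_top m :
  \sum_(F : {set 'I_m.+3} | is_filter Xi_cov F && (ord0 \in F)) 'X^(m.+3 - #|F|)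
  = R_Gamma m.+2.
Proof.
have filter_top : is_filter Xi_cov (glue [set: 'I_1] (@set0 'I_m.+2)).
  apply/is_filterP => u v; case: (split_ordP u) => j ->.
    by rewrite ord1 Xi_cov1.
  by rewrite mem_glue_rshift inE.
have filter_all : is_filter Xi_cov (glue [set: 'I_1] [set: 'I_m.+2]).
  by rewrite glueTT is_filterT.
have := @rank_gen_glue Xi_cov Z_cov 1 m.+2 Xi_cov_shift1 _ filter_top filter_all.
rewrite cardsT card_ord subnn expr0 mul1r /R_Gamma => <-.
apply: eq_bigl => F; congr (_ && _).
have lshift0 : lshift m.+2 (ord0 : 'I_1) = ord0 :> 'I_m.+3 by apply: val_inj.
apply/idP/eqP => [F0 | /setP/(_ ord0)]; last by rewrite !inE lshift0 => ->.
by apply/setP => i; rewrite ord1 !inE lshift0.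
Qed.

Lemma Xi_filter_notop m (F : {set 'I_m.+3}) : is_filter Xi_cov F ->
  (ord0 \notin F) = ([set i : 'I_3 | lshift m i \in F] == set0).
Proof.
move=> /is_filterP filterF.
have inF (u v : 'I_m.+3) : u = v :> nat -> (u \in F) = (v \in F).
  by move/val_inj->.
apply/idP/eqP => [F0 | /setP/(_ ord0)]; last first.
  by rewrite !inE (inF _ ord0) // => ->.
pose x2 : 'I_m.+3 := Ordinal (isT : (1 < m.+3)%N).
pose x3 : 'I_m.+3 := Ordinal (isT : (2 < m.+3)%N).
have F2 : x2 \notin F by apply: contra F0; apply: filterF.
have F3 : x3 \notin F by apply: contra F2; apply: filterF.
apply/setP => -[[|[|[|i]]] lti] //; rewrite !inE; apply/negbTE.
- by rewrite (inF _ ord0).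
- by rewrite (inF _ x2).
- by rewrite (inF _ x3).
Qed.

Lemma rank_gen_Xi_notop m :
  \sum_(F : {set 'I_m.+3} | is_filter Xi_cov F && (ord0 \notin F)) 'X^(m.+3 - #|F|)
  = 'X^3 * R_Gamma m.
Proof.
have filter0 : is_filter Xi_cov (glue (@set0 'I_3) (@set0 'I_m)).
  apply/is_filterP => u v _; case: (split_ordP u) => j ->.
    by rewrite mem_glue_lshift inE.
  by rewrite mem_glue_rshift inE.
have filterT : is_filter Xi_cov (glue (@set0 'I_3) [set: 'I_m]).
  apply/is_filterP => u v; case: (split_ordP v) => j ->; last first.
    by rewrite mem_glue_rshift in_setT.
  case: (split_ordP u) => i ->; first by rewrite mem_glue_lshift inE.
  by rewrite Xi_cov_tail //; exact: (ltn_ord j).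
have := @rank_gen_glue Xi_cov Z_cov 3 m Xi_cov_shift3 _ filter0 filterT.
rewrite cards0 subn0 /R_Gamma => <-.
apply: eq_bigl => F; apply/andb_id2l; exact: Xi_filter_notop.
Qed.

Theorem mainTheorem1 (n : nat) (hn : (3 <= n)%N) :
  R_Omega n = R_Gamma (n - 1) + 'X^3 * R_Gamma (n - 3).
Proof.
case: n hn => [|[|[|m]]] // _.
rewrite /R_Omega /rank_gen (bigID (fun F : {set 'I_m.+3} => ord0 \in F)) /=.
by rewrite rank_gen_Xi_top rank_gen_Xi_notop subn1 !subSS subn0.
Qed.
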